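(* Let $\mathbf f:\mathbb{R}/\mathbb{Z}\to\mathbb{R}^n$ satisfy $L_1\,d_{\mathbb{R}/\mathbb{Z}}(\theta,\theta')\le\|\mathbf f(\theta)-\mathbf f(\theta')\|\le L_2\,d_{\mathbb{R}/\mathbb{Z}}(\theta,\theta')$ for all $\theta,\theta'$, with constants $0<L_1\le L_2$. For each $m$ let $0\le\theta_1<\dots<\theta_m<1$ (indices cyclic, $\theta_{k+m}=\theta_k+1$) satisfy the equilateral condition $\|\Delta_k\mathbf f\|=L_m/m$ for $k=1,\dots,m$, where $L_m=\sum_{k=1}^m\|\Delta_k\mathbf f\|$. Then for all sufficiently large $m$ and all integers $i,j$ with $|i-j|\le[\frac m2]$, \[ A_i\|\Delta_i^j\mathbf f\|\ge\frac{L_mL_1}{L_2}\frac{|i-j|-\frac12}{m},\quad A_i\|\Delta_i^{j+1}\mathbf f\|\ge\frac{L_mL_1}{L_2}\frac{|i-j|-\frac12}{m}, \] \[ A_{ij}\|\Delta_i^j\mathbf f\|\ge\frac{L_mL_1}{L_2}\frac{|i-j|-\frac14}{m},\quad A_{ij}\|\Delta_i^{j+1}\mathbf f\|\ge\frac{L_mL_1}{2L_2}\frac{|i-j|}{m}. \]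
   Context: $\Delta_i^j\mathbf f=\mathbf f(\theta_j)-\mathbf f(\theta_i)$, $\Delta_i\mathbf f=\Delta_i^{i+1}\mathbf f$, $\mathbf f$ regarded as $1$-periodic on $\mathbb{R}$; $[x]$ is the integer part. For a doubly indexed sequence $u_{ij}$: $A_i(u)=\frac{u_{ij}+u_{(i+1)j}}2$ and $A_{ij}(u)=\frac{u_{ij}+u_{(i+1)j}+u_{i(j+1)}+u_{(i+1)(j+1)}}4$. Thus e.g. $A_i\|\Delta_i^{j+1}\mathbf f\|=\frac12(\|\Delta_i^{j+1}\mathbf f\|+\|\Delta_{i+1}^{j+1}\mathbf f\|)$ and $A_{ij}\|\Delta_i^{j}\mathbf f\|=\frac14(\|\Delta_i^j\mathbf f\|+\|\Delta_{i+1}^j\mathbf f\|+\|\Delta_i^{j+1}\mathbf f\|+\|\Delta_{i+1}^{j+1}\mathbf f\|)$. *)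

From HB Require Import structures.
From mathcomp Require Import all_boot all_order all_algebra.
From mathcomp Require Import reals.
Set Implicit Arguments. Unset Strict Implicit. Unset Printing Implicit Defensive.
Import Order.TTheory GRing.Theory Num.Theory.
Local Open Scope ring_scope.

Definition enorm (R : realType) (n : nat) (v : 'rV[R]_n) : R :=
  Num.sqrt (\sum_(k < n) v 0 k ^+ 2).

(* Distance on R/Z between the classes of x and y: distance of x - y
   to the nearest integer. *)
Definition dRZ (R : realType) (x y : R) : R :=
  let t := (x - y) - (Num.floor (x - y))%:~R in Num.min t (1 - t).

Definition Ai (R : realType) (u : int -> int -> R) (i j : int) : R :=
  (u i j + u (i + 1)%R j) / 2.
Definition Aij (R : realType) (u : int -> int -> R) (i j : int) : R :=
  (u i j + u (i + 1)%R j + u i (j + 1)%R + u (i + 1)%R (j + 1)%R) / 4.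

Definition normDelta (R : realType) (n : nat) (f : R -> 'rV[R]_n)
  (theta : int -> R) (i j : int) : R :=
  enorm (f (theta j) - f (theta i)).

Definition polyLength (R : realType) (n : nat) (f : R -> 'rV[R]_n)
  (theta : int -> R) (m : nat) : R :=
  \sum_(1 <= k < m.+1) normDelta f theta k%:Z (k%:Z + 1).

From HB Require Import structures.
From mathcomp Require Import all_boot all_order all_algebra.
From mathcomp Require Import reals.
From mathcomp Require Import ring lra zify.
Import Order.TTheory GRing.Theory Num.Theory.
Local Open Scope ring_scope.

(* Each side of the equilateral polygon has length s = L_m/m <= L2 (theta_{k+1} - theta_k),
   so k consecutive sides span a parameter arc of length at least k s/L2 and the
   complementary arc one of length at least (m - k) s/L2; the bi-Lipschitz lower bound
   then gives ||Delta_a^{a+k} f|| >= (L1 s/L2) min(k, m - k).  Averaging these chord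
   bounds yields all estimates except the one for A_ij ||Delta_i^j f|| near the
   antipodal index, where one of Delta_{i+1}^j, Delta_i^{j+1} may be a step shorter.
   There the quadrilateral inequality for f(theta_i), f(theta_{i+1}), f(theta_j),
   f(theta_{j+1}), whose two sides Delta_i, Delta_j have length s, shows that these two
   chords cannot both be short once m >= 2 (L2/L1)^2 + 2. *)

Lemma shift_mulrz (U V : zmodType) (g : U -> V) (p : U) (c : V) :
  (forall x, g (x + p) = g x + c) -> forall x q, g (x + p *~ q) = g x + c *~ q.
Proof.
move=> gS x; elim/int_rect => [|k IH|k IH]; first by rewrite !mulr0z !addr0.
- by rewrite -addn1 PoszD !mulrzDr !mulr1z addrA gS IH addrA.
- rewrite -addn1 PoszD opprD !mulrzDr !mulrN1z !addrA.
  by apply: (addIr c); rewrite -gS subrK IH subrK.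
Qed.

Lemma dRZ_le_sub (R : realType) (x y : R) : 0 <= x - y -> dRZ x y <= x - y.
Proof.
move=> xy_ge0; rewrite /dRZ ge_min; apply/orP; left.
have : 0 <= (Num.floor (x - y))%:~R :> R by rewrite ler0z floor_ge0.
lra.
Qed.

Lemma dRZ_min (R : realType) (x y : R) : 0 <= x - y <= 1 ->
  dRZ x y = Num.min (x - y) (1 - (x - y)).
Proof.
case/andP=> t_ge0; rewrite /dRZ le_eqVlt => /orP[/eqP ->|t_lt1].
  by rewrite floor1 subrr subr0 minC.
by rewrite (@floor_def _ _ 0) ?subr0 // t_ge0 add0r.
Qed.

Lemma enorm_ge0 (R : realType) (n : nat) (v : 'rV[R]_n) : 0 <= enorm v.
Proof. exact: sqrtr_ge0. Qed.

Lemma enormN (R : realType) (n : nat) (v : 'rV[R]_n) : enorm (- v) = enorm v.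
Proof.
by rewrite /enorm; congr Num.sqrt; apply: eq_bigr => k _; rewrite mxE sqrrN.
Qed.

Lemma enorm_sqr (R : realType) (n : nat) (v : 'rV[R]_n) :
  enorm v ^+ 2 = \sum_(k < n) v 0 k ^+ 2.
Proof. by rewrite /enorm sqr_sqrtr // sumr_ge0 // => k _; apply: sqr_ge0. Qed.

(* The defect is the squared norm of (p' - p) + (q' - q). *)
Lemma enorm_quadrilateral (R : realType) (n : nat) (p p' q q' : 'rV[R]_n) :
  enorm (q - p) ^+ 2 + enorm (q' - p') ^+ 2 <=
  enorm (q - p') ^+ 2 + enorm (q' - p) ^+ 2 + enorm (p' - p) ^+ 2
  + enorm (q' - q) ^+ 2.
Proof.
rewrite -subr_ge0 !enorm_sqr -!big_split -sumrB /=.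
apply: sumr_ge0 => k _; rewrite !mxE.
set a := p 0 k; set b := p' 0 k; set c := q 0 k; set d := q' 0 k.
have -> : (c - b) ^+ 2 + (d - a) ^+ 2 + (b - a) ^+ 2 + (d - c) ^+ 2 -
  ((c - a) ^+ 2 + (d - b) ^+ 2) = (b - a + (d - c)) ^+ 2 by ring.
exact: sqr_ge0.
Qed.

(* Otherwise X^2 + Y^2 <= (X + Y - A)^2 + A^2 < (e D)^2 + A^2 with A = e (D - 1),
   which is at most P^2 + Q^2 - 2 s^2. *)
Lemma quadrilateral_sides_lb {R : realType} {X Y P Q e s D : R} :
  0 <= e -> 1 <= D -> e * (D - 1) <= X -> e * (D - 1) <= Y ->
  e * D <= P -> e * D <= Q ->
  P ^+ 2 + Q ^+ 2 <= X ^+ 2 + Y ^+ 2 + s ^+ 2 + s ^+ 2 ->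
  2 * s ^+ 2 <= (2 * D - 1) * e ^+ 2 ->
  e * (2 * D - 1) <= X + Y.
Proof.
move=> e_ge0 D_ge1 X_lb Y_lb P_lb Q_lb quad s_small.
rewrite leNgt; apply/negP => XY_small.
set A := e * (D - 1) in X_lb Y_lb *.
have A_ge0 : 0 <= A by apply: mulr_ge0; lra.
have De_ge0 : 0 <= e * D by apply: mulr_ge0; lra.
have PQ_lb : 2 * (e * D) ^+ 2 <= P ^+ 2 + Q ^+ 2 by nra.
have XY_sqr : X ^+ 2 + Y ^+ 2 <= (X + Y - A) ^+ 2 + A ^+ 2.
  have : 0 <= (X - A) * (Y - A) by apply: mulr_ge0; lra.
  have -> : (X + Y - A) ^+ 2 + A ^+ 2 = X ^+ 2 + Y ^+ 2 + 2 * ((X - A) * (Y - A))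
    by ring.
  lra.
have : (X + Y - A) ^+ 2 < (A + e) ^+ 2.
  have : 0 <= X + Y - A by lra.
  have : X + Y - A < A + e by rewrite /A; lra.
  nra.
have -> : (A + e) ^+ 2 = (e * D) ^+ 2 by rewrite /A; ring.
have : 2 * (e * D) ^+ 2 = (e * D) ^+ 2 + A ^+ 2 + (2 * D - 1) * e ^+ 2
  by rewrite /A; ring.
lra.
Qed.

(* Distance of the indices a, b on Z/mZ provided |b - a| <= m; otherwise it is
   negative, which makes the chord bound below trivially true. *)
Definition cycdist (m : nat) (a b : int) : int :=
  Num.min `|b - a| (m%:Z - `|b - a|).

Lemma cycdist_sym (m : nat) (a b : int) : cycdist m a b = cycdist m b a.
Proof. by rewrite /cycdist distrC. Qed.

Lemma cycdist_diag {m : nat} {i j : int} : 2 * `|i - j| <= m%:Z ->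
  `|i - j| <= cycdist m i j /\ `|i - j| <= cycdist m (i + 1) (j + 1).
Proof. rewrite /cycdist; lia. Qed.

Lemma cycdist_adjacent {m : nat} {i j : int} : 2 * `|i - j| <= m%:Z ->
  `|i - j| - 1 <= cycdist m (i + 1) j /\ `|i - j| - 1 <= cycdist m i (j + 1).
Proof. rewrite /cycdist; lia. Qed.

Lemma cycdist_succ_sum {m : nat} {i j : int} : 2 * `|i - j| <= m%:Z -> (4 <= m)%N ->
  `|i - j| + `|i - j| <= cycdist m i (j + 1) + cycdist m (i + 1) (j + 1)
                         + cycdist m i (j + 1 + 1) + cycdist m (i + 1) (j + 1 + 1).
Proof. rewrite /cycdist; lia. Qed.

Lemma cycdist_adjacent_sum {m : nat} {i j : int} : 2 * `|i - j| + 2 <= m%:Z ->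
  `|i - j| + `|i - j| <= cycdist m (i + 1) j + cycdist m i (j + 1).
Proof. rewrite /cycdist; lia. Qed.

Lemma near_antipodal {m : nat} {i j : int} : (4 <= m)%N -> m%:Z < 2 * `|i - j| + 2 ->
  1 <= `|i - j| /\ m%:Z <= `|i - j| + `|i - j| + 1.
Proof. lia. Qed.

Section EquilateralPolygon.

Context {R : realType} {n : nat} {f : R -> 'rV[R]_n} {L1 L2 s : R}.
Context {m : nat} {th : int -> R}.

Hypothesis f_periodic : forall x, f (x + 1) = f x.
Hypothesis L1_gt0 : 0 < L1.
Hypothesis L1_le_L2 : L1 <= L2.
Hypothesis f_lb : forall x y, L1 * dRZ x y <= enorm (f x - f y).
Hypothesis f_ub : forall x y, enorm (f x - f y) <= L2 * dRZ x y.
Hypothesis m_gt0 : (0 < m)%N.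
Hypothesis th_incr : forall k : int, 1 <= k -> k < m%:Z -> th k < th (k + 1).
Hypothesis th_wrap : th m%:Z < th 1 + 1.
Hypothesis th_period : forall k : int, th (k + m%:Z) = th k + 1.
Hypothesis side_eq : forall k : int, 1 <= k -> k <= m%:Z -> normDelta f th k (k + 1) = s.

Local Notation u := (normDelta f th).
Local Notation E := (L1 * s / L2).

Let L2_gt0 : 0 < L2. Proof. exact: lt_le_trans L1_le_L2. Qed.

Lemma normDeltaC (a b : int) : u a b = u b a.
Proof. by rewrite /normDelta -enormN opprB. Qed.

Lemma th_shift (k q : int) : th (k + m%:Z *~ q) = th k + q%:~R.
Proof. exact: shift_mulrz. Qed.

Lemma normDelta_shift (a b q : int) : u (a + m%:Z *~ q) (b + m%:Z *~ q) = u a b.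
Proof.
have f_shift x : f (x + 1 *~ q) = f x.
  by rewrite (@shift_mulrz _ _ f 1 0) ?mul0rz ?addr0 // => y; rewrite addr0.
by rewrite /normDelta !th_shift !f_shift.
Qed.

Lemma index_reduce (k : int) :
  exists r q : int, [/\ 1 <= r, r <= m%:Z & k = r + m%:Z *~ q].
Proof.
have m_neq0 : m%:Z != 0 by lia.
have mz_gt0 : 0 < m%:Z by lia.
have := divz_eq (k - 1) m%:Z; have := modz_ge0 (k - 1) m_neq0.
have := ltz_pmod (k - 1) mz_gt0.
set q := ((k - 1) %/ m%:Z)%Z; set r := ((k - 1) %% m%:Z)%Z => r_lt r_ge0 k_eq.
by exists (r + 1), q; rewrite mulrzz; split; lia.
Qed.

Lemma th_lt_succ (k : int) : th k < th (k + 1).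
Proof.
have [r [q [r_ge1 r_le_m ->]]] := index_reduce k.
rewrite addrAC !th_shift ltrD2r.
have [r_lt_m|r_ge_m] := ltP r m%:Z; first exact: th_incr.
have -> : r = m%:Z by lia.
by rewrite addrC th_period.
Qed.

Lemma normDelta_succ (k : int) : u k (k + 1) = s.
Proof.
have [r [q [r_ge1 r_le_m ->]]] := index_reduce k.
by rewrite addrAC normDelta_shift side_eq.
Qed.

Lemma side_ge0 : 0 <= s.
Proof. by rewrite -(normDelta_succ 0) enorm_ge0. Qed.

Lemma side_le_step (k : int) : s <= L2 * (th (k + 1) - th k).
Proof.
rewrite -(normDelta_succ k); apply: le_trans (f_ub _ _) _.
rewrite ler_pM2l //; apply: dRZ_le_sub.
by rewrite subr_ge0 ltW // th_lt_succ.
Qed.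

Lemma side_le_arc (a : int) (k : nat) : k%:R * s <= L2 * (th (a + k%:Z) - th a).
Proof.
elim: k => [|k IH]; first by rewrite addr0 subrr mulr0 mul0r.
have := side_le_step (a + k%:Z).
rewrite -addrA -PoszD addn1 mulrSr; lra.
Qed.

Lemma arc_dRZ_lb (a : int) (k : nat) (c : R) : (k <= m)%N ->
  c <= k%:R -> c <= m%:R - k%:R -> c * s <= L2 * dRZ (th (a + k%:Z)) (th a).
Proof.
move=> k_le_m c_le_k c_le_mk.
have fwd := side_le_arc a k.
have bwd := side_le_arc (a + k%:Z) (m - k).
rewrite -addrA -PoszD subnKC // th_period natrB // in bwd.
have k_ge0 : 0 <= k%:R :> R by [].
have mk_ge0 : 0 <= m%:R - k%:R :> R by rewrite subr_ge0 ler_nat.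
have s_ge0 := side_ge0.
have L2_pos := L2_gt0.
have : 0 <= k%:R * s by apply: mulr_ge0.
have : 0 <= (m%:R - k%:R) * s by apply: mulr_ge0.
rewrite dRZ_min; last by apply/andP; split; nra.
rewrite (minr_pMr _ _ (ltW L2_pos)) le_min.
have : c * s <= k%:R * s by rewrite ler_wpM2r.
have : c * s <= (m%:R - k%:R) * s by rewrite ler_wpM2r.
lra.
Qed.

Lemma chord_coef_ge0 : 0 <= E.
Proof. by rewrite divr_ge0 ?mulr_ge0 ?side_ge0 // ltW // L2_gt0. Qed.

Lemma chord_lb {a b c : int} : c <= cycdist m a b -> E * c%:~R <= u a b.
Proof.
wlog ab_ge0 : a b / 0 <= b - a => [hw|].
  have [/hw//|ba_lt0] := lerP 0 (b - a).
  by rewrite normDeltaC cycdist_sym; apply: hw; rewrite -opprB oppr_ge0 ltW.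
move=> c_le; have [ab_le|ab_gt] := lerP `|b - a| m%:Z; last first.
  have c_lt0 : c < 0.
    by apply: le_lt_trans c_le _; rewrite /cycdist gt_min subr_lt0 ab_gt orbT.
  apply: (@le_trans _ _ 0); last exact: enorm_ge0.
  by rewrite mulr_ge0_le0 ?chord_coef_ge0 // lerz0 ltW.
move: c_le; rewrite /cycdist => c_le.
set k := `|b - a|%N.
have b_eq : b = a + k%:Z by rewrite /k; lia.
have k_le_m : (k <= m)%N by rewrite /k; lia.
have c_le_k : c%:~R <= k%:R :> R by rewrite pmulrn ler_int /k; lia.
have c_le_mk : c%:~R <= m%:R - k%:R :> R.
  by rewrite !pmulrn -intrB ler_int /k; lia.
have arc := arc_dRZ_lb a k c%:~R k_le_m c_le_k c_le_mk; rewrite -b_eq in arc.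
have chord := f_lb (th b) (th a).
have L2_pos := L2_gt0.
rewrite mulrAC ler_pdivrMr //.
have : L1 * (c%:~R * s) <= L1 * (L2 * dRZ (th b) (th a)) by rewrite ler_pM2l.
have : L2 * (L1 * dRZ (th b) (th a)) <= L2 * u a b by rewrite ler_pM2l.
lra.
Qed.

Lemma normDelta_quadrilateral (i j : int) :
  u i j ^+ 2 + u (i + 1) (j + 1) ^+ 2 <=
  u (i + 1) j ^+ 2 + u i (j + 1) ^+ 2 + s ^+ 2 + s ^+ 2.
Proof.
rewrite -{1}(normDelta_succ i) -(normDelta_succ j).
exact: enorm_quadrilateral.
Qed.

Lemma m_ge4_of_large : 2 * (L2 / L1) ^+ 2 + 2 <= m%:R -> (4 <= m)%N.
Proof.
have : 1 <= (L2 / L1) ^+ 2 by rewrite exprn_ege1 // ler_pdivlMr // mul1r.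
rewrite -(ler_nat R); lra.
Qed.

Context {i j : int}.
Hypothesis ij_half : 2 * `|i - j| <= m%:Z.

Local Notation d := (`|i - j|%:~R : R).

Lemma Ai_lb : E * (d - 1 / 2) <= Ai u i j.
Proof.
have [P _] := cycdist_diag ij_half; have [X _] := cycdist_adjacent ij_half.
have := chord_lb P; have := chord_lb X.
rewrite intrB mulr1z /Ai; lra.
Qed.

Lemma Ai_succ_lb : E * (d - 1 / 2) <= Ai (fun a b => u a (b + 1)) i j.
Proof.
have [_ Q] := cycdist_diag ij_half; have [_ Y] := cycdist_adjacent ij_half.
have := chord_lb Q; have := chord_lb Y.
rewrite intrB mulr1z /Ai; lra.
Qed.

Lemma Aij_succ_lb : (4 <= m)%N -> E * d / 2 <= Aij (fun a b => u a (b + 1)) i j.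
Proof.
move=> m_ge4.
have := cycdist_succ_sum ij_half m_ge4; rewrite -(ler_int R) => /(ler_wpM2l chord_coef_ge0).
have := chord_lb (lexx (cycdist m i (j + 1))).
have := chord_lb (lexx (cycdist m (i + 1) (j + 1))).
have := chord_lb (lexx (cycdist m i (j + 1 + 1))).
have := chord_lb (lexx (cycdist m (i + 1) (j + 1 + 1))).
rewrite !intrD /Aij; lra.
Qed.

Lemma Aij_lb : 2 * (L2 / L1) ^+ 2 + 2 <= m%:R -> E * (d - 1 / 4) <= Aij u i j.
Proof.
move=> m_large.
have [P Q] := cycdist_diag ij_half.
have {}P := chord_lb P; have {}Q := chord_lb Q.
suff sides : E * (2 * d - 1) <= u (i + 1) j + u i (j + 1) by rewrite /Aij; lra.
have [far|near] := lerP (2 * `|i - j| + 2) m%:Z.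
  have := cycdist_adjacent_sum far; rewrite -(ler_int R) => /(ler_wpM2l chord_coef_ge0).
  have := chord_lb (lexx (cycdist m (i + 1) j)).
  have := chord_lb (lexx (cycdist m i (j + 1))).
  rewrite !intrD; have := chord_coef_ge0; lra.
have [X Y] := cycdist_adjacent ij_half.
have {}X := chord_lb X; have {}Y := chord_lb Y.
rewrite intrB mulr1z in X Y.
have [d_ge1 m_le_2d] := near_antipodal (m_ge4_of_large m_large) near.
rewrite -(ler_int R) in d_ge1; rewrite -(ler_int R) !intrD in m_le_2d.
have s_small : 2 * s ^+ 2 <= (2 * d - 1) * E ^+ 2.
  have -> : 2 * s ^+ 2 = 2 * (L2 / L1) ^+ 2 * E ^+ 2.
    by field; rewrite !lt0r_neq0 ?L2_gt0.
  rewrite ler_wpM2r ?sqr_ge0 //; rewrite -pmulrn in m_le_2d; lra.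
exact: quadrilateral_sides_lb chord_coef_ge0 d_ge1 X Y P Q (normDelta_quadrilateral i j) s_small.
Qed.

Lemma averages_lb : 2 * (L2 / L1) ^+ 2 + 2 <= m%:R ->
  [/\ E * (d - 1 / 2) <= Ai u i j,
      E * (d - 1 / 2) <= Ai (fun a b => u a (b + 1)) i j,
      E * (d - 1 / 4) <= Aij u i j &
      E * d / 2 <= Aij (fun a b => u a (b + 1)) i j].
Proof.
move=> m_large; split; [exact: Ai_lb | exact: Ai_succ_lb | exact: Aij_lb |].
exact/Aij_succ_lb/m_ge4_of_large.
Qed.

End EquilateralPolygon.

Theorem mainTheorem5 (R : realType) (n : nat) (f : R -> 'rV[R]_n)
  (L1 L2 : R) (theta : nat -> int -> R) :
  (forall x : R, f (x + 1) = f x) ->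
  0 < L1 -> L1 <= L2 ->
  (forall x y : R, L1 * dRZ x y <= enorm (f x - f y) /\
                   enorm (f x - f y) <= L2 * dRZ x y) ->
  (forall m : nat, (0 < m)%N ->
     [/\ 0 <= theta m 1,
         (forall k : int, 1 <= k -> k < m%:Z -> theta m k < theta m (k + 1)),
         theta m m%:Z < 1,
         (forall k : int, theta m (k + m%:Z) = theta m k + 1) &
         (forall k : int, 1 <= k -> k <= m%:Z ->
            normDelta f (theta m) k (k + 1) = polyLength f (theta m) m / m%:R)]) ->
  exists M : nat, forall m : nat, (M <= m)%N ->
    forall i j : int, `|i - j| <= (m %/ 2)%N%:Z ->
    let Lm := polyLength f (theta m) m in
    let u := normDelta f (theta m) in
    let u1 := fun a b => u a (b + 1) in
    let d := (`|i - j|)%:~R : R in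
    [/\ Ai u i j >= Lm * L1 / L2 * ((d - 1 / 2) / m%:R),
        Ai u1 i j >= Lm * L1 / L2 * ((d - 1 / 2) / m%:R),
        Aij u i j >= Lm * L1 / L2 * ((d - 1 / 4) / m%:R) &
        Aij u1 i j >= Lm * L1 / (2 * L2) * (d / m%:R)].
Proof.
move=> f_periodic L1_gt0 L1_le_L2 f_lip theta_ok.
set x0 := 2 * (L2 / L1) ^+ 2.
exists (Num.truncn x0).+3 => m m_ge i j ij_le Lm u u1 d.
have ij_half : 2 * `|i - j| <= m%:Z by clear -ij_le; lia.
have m_gt0 : (0 < m)%N by apply: leq_trans m_ge.
have m_large : x0 + 2 <= m%:R.
  have : ((Num.truncn x0).+1 + 2 <= m)%N by rewrite addn2.
  rewrite -(ler_nat R) natrD; have := truncnS_gt x0; lra.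
have f_lb x y := proj1 (f_lip x y); have f_ub x y := proj2 (f_lip x y).
have [th1_ge0 th_incr thm_lt1 th_period side_eq] := theta_ok m m_gt0.
have th_wrap : theta m m%:Z < theta m 1 + 1 by lra.
have mR_gt0 : 0 < m%:R :> R by rewrite ltr0n.
have L2_gt0 : 0 < L2 by apply: lt_le_trans L1_le_L2.
have rhs t : Lm * L1 / L2 * (t / m%:R) = L1 * (Lm / m%:R) / L2 * t.
  by field; rewrite !lt0r_neq0.
have rhs2 t : Lm * L1 / (2 * L2) * (t / m%:R) = L1 * (Lm / m%:R) / L2 * t / 2.
  by field; rewrite !lt0r_neq0.
rewrite !rhs rhs2.
exact: (averages_lb f_periodic L1_gt0 L1_le_L2 f_lb f_ub m_gt0
  th_incr th_wrap th_period side_eq ij_half m_large).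
Qed.
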